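(* Let $P$ be a finite poset with a least element $0$ and a greatest element $1$. Then: (a) $P$ is a lattice if and only if $\Delta_\wedge(P)=0$, if and only if $\Delta_\vee(P)=0$. (b) If $\Delta_\wedge(P)\le 1$, then $v_*(x)=|\downarrow x|$ is a (isotone) lower valuation on $P$. (c) If $\Delta_\vee(P)\le 1$, then $v^*(x)=|\uparrow x|$ is an (antitone) lower valuation on $P$.
   Context: For a poset $(P,\le)$ and $x\in P$: $\downarrow x=\{x'\in P: x'\le x\}$, $\uparrow x=\{x'\in P: x\le x'\}$. For $S\subseteq P$, $\mathbf{max}(S)$ and $\mathbf{min}(S)$ denote the sets of maximal and minimal elements of $S$. Define $D_\wedge(x,y)=|\downarrow x\cap\downarrow y|-\max\{|\downarrow z|: z\in\mathbf{max}(\downarrow x\cap\downarrow y)\}$, $\Delta_\wedge(P)=\max_{x,y\in P}D_\wedge(x,y)$; $D_\vee(x,y)=|\uparrow x\cap\uparrow y|-\min\{|\uparrow z|: z\in\mathbf{min}(\uparrow x\cap\uparrow y)\}$, $\Delta_\vee(P)=\max_{x,y\in P}D_\vee(x,y)$. A function $f:P\to\mathbb{R}$ is isotone if $x\le y\Rightarrow f(x)\le f(y)$, antitone if $x\le y\Rightarrow f(x)\ge f(y)$. For a monotone $f$ define $f^-(x,y)=\sup\{f(z):z\in\downarrow x\cap\downarrow y\}$ if $f$ isotone, $\inf\{\cdot\}$ if antitone; $f^+(x,y)=\inf\{f(z):z\in\uparrow x\cap\uparrow y\}$ if $f$ isotone, $\sup\{\cdot\}$ if antitone; with $\inf\emptyset=+\infty$,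 $\sup\emptyset=-\infty$. A lower valuation is either an isotone $v$ with $\downarrow x\cap\downarrow y\neq\emptyset$ for all $x,y$, or an antitone $v$ with $\uparrow x\cap\uparrow y\neq\emptyset$ for all $x,y$, satisfying $v(x)+v(y)\le v^-(x,y)+v^+(x,y)$ for all $x,y\in P$. *)

From HB Require Import structures.
From mathcomp Require Import all_boot all_order all_algebra.
Set Implicit Arguments. Unset Strict Implicit. Unset Printing Implicit Defensive.
Import Order.TTheory GRing.Theory Num.Theory.

Section PosetDefs.
Variables (d : Order.disp_t) (T : finPOrderType d).

Definition down (x : T) : {set T} := [set z | (z <= x)%O].
Definition up (x : T) : {set T} := [set z | (x <= z)%O].

Definition maxs (S : {set T}) : {set T} :=
  [set z in S | [forall w in S, (z <= w)%O ==> (w == z)]].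
Definition mins (S : {set T}) : {set T} :=
  [set z in S | [forall w in S, (w <= z)%O ==> (w == z)]].

Definition Dmeet (x y : T) : nat :=
  #|down x :&: down y| - \max_(z in maxs (down x :&: down y)) #|down z|.
(* D_join(x,y) = |ux ∩ uy| - min { |uz| : z in min(ux ∩ uy) }
   (the default #|T| of the min is an upper bound of every |uz|) *)
Definition Djoin (x y : T) : nat :=
  #|up x :&: up y| - \big[minn/#|T|]_(z in mins (up x :&: up y)) #|up z|.

Definition Delta_meet : nat := \max_(p : T * T) Dmeet p.1 p.2.
Definition Delta_join : nat := \max_(p : T * T) Djoin p.1 p.2.

Definition is_glb (x y m : T) : Prop :=
  (m <= x)%O /\ (m <= y)%O /\ forall z : T, (z <= x)%O -> (z <= y)%O -> (z <= m)%O.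
Definition is_lub (x y j : T) : Prop :=
  (x <= j)%O /\ (y <= j)%O /\ forall z : T, (x <= z)%O -> (y <= z)%O -> (j <= z)%O.
Definition is_lattice : Prop :=
  forall x y : T, (exists m, is_glb x y m) /\ (exists j, is_lub x y j).

Variable R : realDomainType.
Local Open Scope ring_scope.

Definition isotone (f : T -> R) : Prop := forall x y : T, (x <= y)%O -> f x <= f y.
Definition antitone (f : T -> R) : Prop := forall x y : T, (x <= y)%O -> f y <= f x.

(* sup / inf of f over a finite set; None encodes sup ∅ = -oo, resp. inf ∅ = +oo *)
Definition fsup (f : T -> R) (S : {set T}) : option R :=
  if [pick z in S] is Some z0 then Some (\big[Num.max/f z0]_(z in S) f z) else None.
Definition finf (f : T -> R) (S : {set T}) : option R :=
  if [pick z in S] is Some z0 then Some (\big[Num.min/f z0]_(z in S) f z) else None.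

(* the inequality  a + b <= lo + hi  where lo is a sup (None = -oo) and
   hi is an inf (None = +oo); the case -oo + (+oo) never arises below
   because of the nonemptiness hypotheses, and is set to False *)
Definition le_ext (a : R) (lo hi : option R) : Prop :=
  match lo, hi with
  | Some l, Some h => a <= l + h
  | Some _, None => True
  | None, _ => False
  end.
(* for antitone f: lo = inf over down-sets (None = +oo), hi = sup over up-sets *)
Definition le_ext_anti (a : R) (lo hi : option R) : Prop :=
  match lo, hi with
  | Some l, Some h => a <= l + h
  | None, Some _ => True
  | _, None => False
  end.

Definition iso_lower_valuation (v : T -> R) : Prop :=
  isotone v /\
  (forall x y : T, down x :&: down y != set0) /\
  (forall x y : T, le_ext (v x + v y) (fsup v (down x :&: down y))
                                      (finf v (up x :&: up y))).

Definition anti_lower_valuation (v : T -> R) : Prop :=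
  antitone v /\
  (forall x y : T, up x :&: up y != set0) /\
  (forall x y : T, le_ext_anti (v x + v y) (finf v (down x :&: down y))
                                           (fsup v (up x :&: up y))).

Definition lower_valuation (v : T -> R) : Prop :=
  iso_lower_valuation v \/ anti_lower_valuation v.

End PosetDefs.

(* Write dx and ux for the principal down- and up-set of x, and
   I = dx ∩ dy, U = ux ∩ uy for the common lower / upper bounds of x, y.
   The development rests on two elementary facts about finite posets:
   an element is determined by the size of its down-set among the elements
   above it (so nonempty subsets have maximal elements), and a common lower
   bound m with |I| <= |dm| is the glb of x and y.  Order duality (the
   down-sets of T^d are the up-sets of T) turns each of these into its mirror
   statement about up-sets, minimal elements and lubs.

   (a) D_meet(x,y) <= k yields a common lower bound z with |I| <= |dz| + k
       (Dmeet_witness), and likewise for joins.  For k = 0 these witnesses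
       are glbs resp. lubs, and a finite bounded poset in which all glbs (or
       all lubs) exist is a lattice.  Conversely a glb (lub) is the unique
       maximal (minimal) element of I (U), so both defects vanish.
   (b) For k = 1, inclusion-exclusion gives, for every common upper bound u,
       a common lower bound z with |dx| + |dy| <= |dz| + |du|
       (card_down_add_le): this is the lower-valuation inequality for |d_|.
   (c) is (b) on the dual poset, fed with the witnesses of D_join <= 1. *)

From HB Require Import structures.
From mathcomp Require Import all_boot all_order all_algebra.
From mathcomp Require Import zify.
Set Implicit Arguments. Unset Strict Implicit. Unset Printing Implicit Defensive.
Import Order.TTheory GRing.Theory Num.Theory.

Section DownSets.
Variables (d : Order.disp_t) (T : finPOrderType d).
Implicit Types (x y u m : T) (S : {set T}).

Lemma down_subset x y : (x <= y)%O -> down x \subset down y.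
Proof.
by move=> le_xy; apply/subsetP=> z; rewrite !inE => /le_trans; apply.
Qed.

Lemma le_card_down_eq x y : (x <= y)%O -> (#|down y| <= #|down x|)%N -> x = y.
Proof.
move=> le_xy card_yx.
have /eqP down_xy : down x == down y by rewrite eqEcard down_subset.
have : y \in down x by rewrite down_xy inE.
by rewrite inE => le_yx; apply/eqP; rewrite eq_le le_xy.
Qed.

(* Every nonempty subset of a finite poset has a maximal element:
   take one whose down-set is largest. *)
Lemma exists_maxs S a : a \in S -> exists m, m \in maxs S.
Proof.
move=> aS; case: (arg_maxnP (fun z => #|down z|) aS) => m mS m_max.
exists m; apply/setIdP; split=> //.
apply/forall_inP => w wS; apply/implyP => le_mw.
by rewrite (le_card_down_eq le_mw (m_max w wS)).
Qed.

Lemma maxs_down m : maxs (down m) = [set m].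
Proof.
apply/setP=> z; rewrite !inE; apply/andP/eqP => [[le_zm /forall_inP]|->].
  by move=> /(_ m); rewrite inE lexx le_zm => /(_ isT)/eqP.
split=> //; apply/forall_inP => w; rewrite inE => le_wm.
by apply/implyP => le_mw; rewrite eq_le le_wm.
Qed.

Lemma glb_downI x y m : is_glb x y m -> down x :&: down y = down m.
Proof.
case=> le_mx [le_my m_glb]; apply/setP=> z; rewrite !inE.
apply/andP/idP => [[]|le_zm]; first exact: m_glb.
by rewrite !(le_trans le_zm).
Qed.

Lemma glb_of_card x y m : m \in down x :&: down y ->
  (#|down x :&: down y| <= #|down m|)%N -> is_glb x y m.
Proof.
rewrite inE !inE => /andP[le_mx le_my] card_m.
have sub_m : down m \subset down x :&: down y.
  by apply/subsetP=> z; rewrite !inE => le_zm; rewrite !(le_trans le_zm).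
have /eqP down_m : down m == down x :&: down y by rewrite eqEcard sub_m.
split=> //; split=> // z le_zx le_zy.
suff : z \in down m by rewrite inE.
by rewrite down_m !inE le_zx.
Qed.

(* If u is x or y take z the other one;
   otherwise u lies outside dx ∪ dy and inclusion-exclusion applies. *)
Lemma card_down_add_le x y u z0 : (x <= u)%O -> (y <= u)%O ->
  z0 \in down x :&: down y -> (#|down x :&: down y| <= #|down z0| + 1)%N ->
  exists2 z, z \in down x :&: down y &
    (#|down x| + #|down y| <= #|down z| + #|down u|)%N.
Proof.
move=> le_xu le_yu z0I card_z0.
have [|u_out] := boolP (u \in down x :|: down y).
  rewrite !inE => /orP[le_ux|le_uy].
    have eq_ux : u = x by apply/eqP; rewrite eq_le le_ux le_xu.
    by subst u; exists y; rewrite 1?addnC // !inE le_yu lexx.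
  have eq_uy : u = y by apply/eqP; rewrite eq_le le_uy le_yu.
  by subst u; exists x; rewrite // !inE le_xu lexx.
exists z0 => //.
have card_u : (#|down x :|: down y| + 1 <= #|down u|)%N.
  have card_U1 : #|u |: (down x :|: down y)| = (1 + #|down x :|: down y|)%N.
    by rewrite cardsU1 u_out.
  rewrite addnC -card_U1; apply: subset_leq_card.
  apply/subsetP=> w; rewrite !inE => /or3P[/eqP->|le_wx|le_wy] //.
    exact: le_trans le_xu.
  exact: le_trans le_yu.
rewrite -cardsUI; have := leq_add card_u card_z0; lia.
Qed.

End DownSets.

(* The order dual T^d has the same carrier, with down-sets of T^d being the
   up-sets of T, maximal elements the minimal ones and glbs the lubs; so each
   statement about down-sets above yields its mirror image for free. *)
Section UpSets.
Variables (d : Order.disp_t) (T : finPOrderType d).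
Implicit Types (x y m : T) (S : {set T}).

Lemma exists_mins S a : a \in S -> exists m, m \in mins S.
Proof. exact: (exists_maxs (T:=T^d)). Qed.

Lemma mins_up m : mins (up m) = [set m].
Proof. exact: (maxs_down (T:=T^d)). Qed.

Lemma lub_upI x y m : is_lub x y m -> up x :&: up y = up m.
Proof. exact: (glb_downI (T:=T^d)). Qed.

Lemma lub_of_card x y m : m \in up x :&: up y ->
  (#|up x :&: up y| <= #|up m|)%N -> is_lub x y m.
Proof. exact: (glb_of_card (T:=T^d)). Qed.

End UpSets.

Section Defects.
Variables (d : Order.disp_t) (T : finTBPOrderType d).
Implicit Types (x y m : T) (k : nat).

Lemma Delta_meet_leP k :
  reflect (forall x y, Dmeet x y <= k)%N (Delta_meet T <= k)%N.
Proof.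
apply: (iffP (bigmax_leqP xpredT k (fun p : T * T => Dmeet p.1 p.2))).
  by move=> bound x y; apply: (bound (x, y)).
by move=> bound [x y] _; apply: bound.
Qed.

Lemma Delta_join_leP k :
  reflect (forall x y, Djoin x y <= k)%N (Delta_join T <= k)%N.
Proof.
apply: (iffP (bigmax_leqP xpredT k (fun p : T * T => Djoin p.1 p.2))).
  by move=> bound x y; apply: (bound (x, y)).
by move=> bound [x y] _; apply: bound.
Qed.

(* D_meet(x,y) <= k means some common lower bound z (a maximal one realizing
   the maximum) has |dx ∩ dy| <= |dz| + k; maximal elements exist since
   the common lower bounds contain \bot. *)
Lemma Dmeet_witness x y k : (Dmeet x y <= k)%N ->
  exists2 z, z \in down x :&: down y &
    (#|down x :&: down y| <= #|down z| + k)%N.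
Proof.
have [m m_max] : exists m, m \in maxs (down x :&: down y).
  by apply: (exists_maxs (a := \bot%O)); rewrite !inE !le0x.
have maxs_gt0 : (0 < #|maxs (down x :&: down y)|)%N.
  by apply/card_gt0P; exists m.
have [z /setIdP[zI _] max_z] := eq_bigmax_cond (fun z => #|down z|) maxs_gt0.
by rewrite /Dmeet max_z => defect; exists z; rewrite // -leq_subLR.
Qed.

(* D_join(x,y) <= k means some common upper bound w has
   |ux ∩ uy| <= |uw| + k: any minimal common upper bound (one exists since
   \top is a common upper bound) bounds the minimum in D_join. *)
Lemma Djoin_witness x y k : (Djoin x y <= k)%N ->
  exists2 w, w \in up x :&: up y & (#|up x :&: up y| <= #|up w| + k)%N.
Proof.
have [w w_min] : exists w, w \in mins (up x :&: up y).
  by apply: (exists_mins (a := \top%O)); rewrite !inE !lex1.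
move=> defect; exists w; first by case/setIdP: w_min.
rewrite -leq_subLR (leq_trans _ defect) // leq_sub2l //.
exact: (bigmin_le_cond #|T| (fun z => #|up z|) w_min).
Qed.

(* A glb has defect 0: the common lower bounds form its down-set, of which
   it is the only maximal element. *)
Lemma glb_Dmeet x y m : is_glb x y m -> Dmeet x y = 0%N.
Proof.
by move=> /glb_downI eq_I; rewrite /Dmeet eq_I maxs_down big_set1 subnn.
Qed.

(* A lub has join defect 0: it is the only minimal common upper bound. *)
Lemma lub_Djoin x y m : is_lub x y m -> Djoin x y = 0%N.
Proof.
move=> /lub_upI eq_U; apply/eqP; rewrite /Djoin eq_U mins_up subn_eq0.
apply: (big_ind (fun v => #|up m| <= v)%N); first exact: max_card.
  by move=> a b le_a le_b; rewrite leq_min le_a le_b.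
by move=> z /set1P ->.
Qed.

(* In a finite poset with \top, existence of all glbs gives a lattice: the
   lub of x and y is a minimal common upper bound j, since the glb of j and
   any common upper bound u is again a common upper bound below j. *)
Lemma meets_lattice : (forall x y, exists m, is_glb x y m) -> is_lattice T.
Proof.
move=> glb_ex x y; split; first exact: glb_ex.
have [j /setIdP[jU j_min]] : exists j, j \in mins (up x :&: up y).
  by apply: (exists_mins (a := \top%O)); rewrite !inE !lex1.
move: (jU); rewrite !inE => /andP[le_xj le_yj].
exists j; split=> //; split=> // u le_xu le_yu.
have [m [le_mj [le_mu m_glb]]] := glb_ex j u.
have mU : m \in up x :&: up y by rewrite !inE !m_glb.
by move/forall_inP: j_min => /(_ m mU)/implyP/(_ le_mj)/eqP <-.
Qed.

End Defects.

Lemma is_lattice_dual (d : Order.disp_t) (T : finPOrderType d) :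
  is_lattice T^d <-> is_lattice T.
Proof. by split=> lat x y; have [glb lub] := lat x y; split. Qed.

Section Lattices.
Variables (d : Order.disp_t) (T : finTBPOrderType d).

Lemma joins_lattice : (forall x y : T, exists m, is_lub x y m) -> is_lattice T.
Proof. by move=> lub_ex; apply/is_lattice_dual/(meets_lattice (T := T^d)). Qed.

Lemma lattice_Delta_meet : is_lattice T <-> Delta_meet T = 0%N.
Proof.
split=> [lat | /eqP]; last rewrite -leqn0 => /Delta_meet_leP defect0.
  apply/eqP; rewrite -leqn0; apply/Delta_meet_leP => x y.
  by have [[m /glb_Dmeet ->] _] := lat x y.
apply: meets_lattice => x y; have [m mI card_m] := Dmeet_witness (defect0 x y).
by exists m; apply: glb_of_card; rewrite // -(addn0 #|down m|).
Qed.

Lemma lattice_Delta_join : is_lattice T <-> Delta_join T = 0%N.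
Proof.
split=> [lat | /eqP]; last rewrite -leqn0 => /Delta_join_leP defect0.
  apply/eqP; rewrite -leqn0; apply/Delta_join_leP => x y.
  by have [_ [m /lub_Djoin ->]] := lat x y.
apply: joins_lattice => x y; have [m mU card_m] := Djoin_witness (defect0 x y).
by exists m; apply: lub_of_card; rewrite // -(addn0 #|up m|).
Qed.

End Lattices.

Section ExtendedInequality.
Variables (d : Order.disp_t) (T : finPOrderType d).
Variables (R : realDomainType) (f : T -> R).
Local Open Scope ring_scope.

Lemma le_ext_sup_inf (a : R) (I U : {set T}) : I != set0 ->
  (forall u, u \in U -> exists2 z, z \in I & a <= f z + f u) ->
  le_ext a (fsup f I) (finf f U).
Proof.
move=> /set0Pn[z1 z1I] matched; rewrite /le_ext /fsup /finf.
case: pickP => [z0 _ | noI]; last by move: (noI z1); rewrite /= z1I.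
case: pickP => [u0 u0U | //].
set M := \big[_/_]_(z in I) f z.
have below_inf u : u \in U -> a - M <= f u.
  case/matched => z zI le_a; rewrite lerBlDl (le_trans le_a) // lerD2r.
  exact: le_bigmax_cond.
by rewrite -lerBlDl; apply/bigmin_geP; split=> [|u uU]; apply: below_inf.
Qed.

Lemma le_ext_anti_swap (a : R) (lo hi : option R) :
  le_ext a hi lo -> le_ext_anti a lo hi.
Proof. by case: lo hi => [l|] [h|] //=; rewrite addrC. Qed.

End ExtendedInequality.

Section CardinalValuations.
Variable R : realDomainType.
Local Open Scope ring_scope.

Lemma card_down_lower_valuation (d : Order.disp_t) (T : finTBPOrderType d) :
  (forall x y : T, exists2 z, z \in down x :&: down y &
     (#|down x :&: down y| <= #|down z| + 1)%N) ->
  iso_lower_valuation (fun x : T => #|down x|%:R : R).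
Proof.
move=> near_meet; split; [|split].
- by move=> x y /down_subset/subset_leq_card; rewrite ler_nat.
- by move=> x y; apply/set0Pn; exists \bot%O; rewrite !inE !le0x.
move=> x y; apply: le_ext_sup_inf.
  by apply/set0Pn; exists \bot%O; rewrite !inE !le0x.
move=> u; rewrite !inE => /andP[le_xu le_yu].
have [z0 z0I card_z0] := near_meet x y.
have [z zI card_z] := card_down_add_le le_xu le_yu z0I card_z0.
by exists z; rewrite // -!natrD ler_nat.
Qed.

Lemma anti_lower_valuation_dual (d : Order.disp_t) (T : finPOrderType d)
    (v : T -> R) :
  iso_lower_valuation (T := T^d) v -> anti_lower_valuation v.
Proof.
case=> iso_v [up_nonempty le_v]; split; first by move=> x y /(iso_v y x).
by split=> // x y; apply/le_ext_anti_swap/le_v.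
Qed.

Lemma down_card_lower_valuation (d : Order.disp_t) (T : finTBPOrderType d) :
  (Delta_meet T <= 1)%N -> iso_lower_valuation (fun x : T => #|down x|%:R : R).
Proof.
move/Delta_meet_leP => defect1; apply: card_down_lower_valuation => x y.
exact: Dmeet_witness.
Qed.

(* Part (c): on the dual poset the up-sets are down-sets, and the witnesses
   for D_join <= 1 are exactly the hypothesis of the core lemma there. *)
Lemma up_card_lower_valuation (d : Order.disp_t) (T : finTBPOrderType d) :
  (Delta_join T <= 1)%N -> anti_lower_valuation (fun x : T => #|up x|%:R : R).
Proof.
move/Delta_join_leP => defect1; apply: anti_lower_valuation_dual.
apply: (card_down_lower_valuation (T := T^d)) => x y.
exact (Djoin_witness (defect1 x y)).
Qed.

End CardinalValuations.

Theorem mainTheorem8 (d : Order.disp_t) (P : finTBPOrderType d) :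
  ((is_lattice P <-> Delta_meet P = 0%N) /\ (Delta_meet P = 0%N <-> Delta_join P = 0%N)) /\
  (forall R : realDomainType, (Delta_meet P <= 1)%N ->
     iso_lower_valuation (fun x : P => (#|down x|%:R)%R : R)) /\
  (forall R : realDomainType, (Delta_join P <= 1)%N ->
     anti_lower_valuation (fun x : P => (#|up x|%:R)%R : R)).
Proof.
split; [split|split=> R].
- exact: lattice_Delta_meet.
- by rewrite -lattice_Delta_meet lattice_Delta_join.
- exact: down_card_lower_valuation.
- exact: up_card_lower_valuation.
Qed.
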